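(* Let $r\ge 1$ and $k\ge 0$ be integers and let $T$ be the binary tree constructed from $r$ and $k$ as described in the context. Then the height of $T$ is at most $r+3k$.
   Context: For a binary string $s$, let $f(s)$ be the string obtained from $s$ by first exhaustively removing the prefix $11$ and then exhaustively removing all substrings $011$; let $e(s)$ be the total number of removals (of a prefix $11$ or of a substring $011$) performed by $f$. The tree $T$ has vertices labeled by binary strings: the root is labeled by the empty string $\varepsilon$; a vertex labeled $s$ with $|f(s)|\le r$ and $e(s)\le k$ has a child labeled $s0$ if $|f(s)|<r$, and a child labeled $s1$ if $|f(s)|<r$ or $e(s)<k$; no other children are created. A vertex with no children is a leaf with seed position name $f(s)$. Finally, for every internal vertex with exactly one child, a copy of that child together with its whole subtree (with the same labels and seed position names) is added as a second child, so that $T$ is a full binary tree. The height is the maximum number of edges on a root-to-leaf path. *)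

(* Binary strings are [seq bool], false = 0, true = 1. *)
From mathcomp Require Import all_boot.
Set Implicit Arguments. Unset Strict Implicit. Unset Printing Implicit Defensive.

Fixpoint strip11 (s : seq bool) : seq bool * nat :=
  match s with
  | true :: true :: t => let: (u, c) := strip11 t in (u, c.+1)
  | _ => (s, 0)
  end.

Fixpoint rm011_once (s : seq bool) : option (seq bool) :=
  match s with
  | false :: true :: true :: t => Some t
  | x :: t => omap (cons x) (rm011_once t)
  | [::] => None
  end.

(* The rewriting 011 -> empty has no critical pairs,
   hence the normal form and the number of removals do not depend on the order. *)
Fixpoint rm011 (n : nat) (s : seq bool) : seq bool * nat :=
  match n with
  | 0 => (s, 0)
  | n'.+1 =>
      match rm011_once s with
      | Some t => let: (u, c) := rm011 n' t in (u, c.+1)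
      | None => (s, 0)
      end
  end.

Definition fe (s : seq bool) : seq bool * nat :=
  let: (u, c1) := strip11 s in
  let: (v, c2) := rm011 (size u) u in (v, c1 + c2).

Definition f (s : seq bool) : seq bool := (fe s).1.
Definition e (s : seq bool) : nat := (fe s).2.

Definition alive (r k : nat) (s : seq bool) : bool := (size (f s) <= r) && (e s <= k).
Definition has0 (r k : nat) (s : seq bool) : bool := alive r k s && (size (f s) < r).
Definition has1 (r k : nat) (s : seq bool) : bool :=
  alive r k s && ((size (f s) < r) || (e s < k)).
Definition internal (r k : nat) (s : seq bool) : bool := has0 r k s || has1 r k s.

(* The full binary tree T: a vertex is addressed by its sequence of
   left/right choices d from the root (false = left, true = right).
   [lab r k d] is the binary-string label of that vertex.  If the vertex
   labeled s has both children s0 and s1, direction x leads to s x; if it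
   has exactly one child (s b), both directions lead to (a copy of) s b. *)
Fixpoint lab (r k : nat) (d : seq bool) : seq bool :=
  match d with
  | [::] => [::]
  | x :: d' =>
      let s := lab r k d' in
      if has0 r k s && has1 r k s then rcons s x
      else if has0 r k s then rcons s false else rcons s true
  end.
(* NB: [d] is stored in reverse order (last choice first), so [x :: d']
   is the child in direction x of the vertex [d']. *)

Definition vertexT (r k : nat) (d : seq bool) : Prop :=
  forall i, i < size d -> internal r k (lab r k (drop i.+1 d)).

Definition leafT (r k : nat) (d : seq bool) : Prop :=
  vertexT r k d /\ ~~ internal r k (lab r k d).

(* "height of T is at most h": T has no infinite branch and every
   root-to-leaf path has at most h edges; equivalently every vertex has
   depth at most h. *)
Definition height_le (r k h : nat) : Prop :=
  forall d, vertexT r k d -> size d <= h.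

From mathcomp Require Import all_boot.
From mathcomp Require Import zify.

Set Implicit Arguments.
Unset Strict Implicit.
Unset Printing Implicit Defensive.

(* Removing the prefix 11 shortens a string by 2 and removing 011 shortens it
   by 3, so |s| <= |f(s)| + 3 e(s).  An internal vertex s has |f(s)| <= r and
   e(s) <= k with one of the two strict, hence |s| < r + 3k.  Labels at depth n
   have length n, so the parent of any vertex has depth < r + 3k. *)

Lemma size_strip11 s : size s = size (strip11 s).1 + 2 * (strip11 s).2.
Proof.
have [n] := ubnP (size s); elim: n s => // n IH [|[] [|[] t]] //= lt_s; try lia.
have := IH t; case: (strip11 t) => u c /= -> //; lia.
Qed.

Lemma size_rm011_once s t : rm011_once s = Some t -> size s = size t + 3.
Proof.
elim: s t => [|x s IH] t //.
have size_cons : omap (cons x) (rm011_once s) = Some t -> size (x :: s) = size t + 3.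
  by case E: (rm011_once s) => [u|] //= [<-]; rewrite /= (IH _ E).
case: x size_cons => [|] size_cons; first exact: size_cons.
case: s IH size_cons => [|[] [|[] s]] _ size_cons //=; try exact: size_cons.
by case=> <-; rewrite addn3.
Qed.

Lemma size_rm011 n s : size s = size (rm011 n s).1 + 3 * (rm011 n s).2.
Proof.
elim: n s => [|n IH] s /=; first by rewrite addn0.
case E: (rm011_once s) => [t|] /=; last by rewrite addn0.
have := IH t; case: (rm011 n t) => u c /= size_t.
rewrite (size_rm011_once E) size_t; lia.
Qed.

Lemma size_le_f_e s : size s <= size (f s) + 3 * e s.
Proof.
rewrite /f /e /fe; have := size_strip11 s.
case: (strip11 s) => u c1 /= size_s; have := size_rm011 (size u) u.
case: (rm011 (size u) u) => v c2 /= size_u; lia.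
Qed.

Lemma internal_size r k s : internal r k s -> size s < r + 3 * k.
Proof.
rewrite /internal /has0 /has1 /alive => int_s; have := size_le_f_e s.
by case/orP: int_s => /andP[/andP[? ?] ?]; lia.
Qed.

Lemma lab_size r k d : size (lab r k d) = size d.
Proof.
elim: d => [|x d IH] //=.
by case: ifP => _; [|case: ifP => _]; rewrite size_rcons IH.
Qed.

Lemma vertexT_parent_internal r k x d :
  vertexT r k (x :: d) -> internal r k (lab r k d).
Proof. by move/(_ 0 isT); rewrite /= drop0. Qed.

Theorem lemma9 (r k : nat) (hr : 1 <= r) : height_le r k (r + 3 * k).
Proof.
move=> [|x d] // /vertexT_parent_internal /internal_size.
by rewrite lab_size.
Qed.
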